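(* Let $T$ be an Artin algebra, $X$ an indecomposable left $T$-module and $n\geq1$ an integer. Let $B_n'$ be the algebra of $n\times n$ upper triangular matrices with entries in $T$, $$B_n'=\begin{pmatrix} T&T&\cdots&T\\ 0&T&\cdots&T\\ \vdots&\vdots&\ddots&\vdots\\ 0&0&\cdots&T\end{pmatrix},$$ and let $M_n$ be the column $\begin{pmatrix}T\\ \vdots\\ T\end{pmatrix}$ with $n$ rows, with left $B_n'$-action and right $T$-action given by matrix multiplication. Then $M_n\otimes_TX$ is an indecomposable left $B_n'$-module.
   Context: Standard notions only: Artin algebras, tensor products of bimodules and modules. *)

From HB Require Import structures.
From mathcomp Require Import all_boot all_order all_algebra.
Set Implicit Arguments. Unset Strict Implicit. Unset Printing Implicit Defensive.
Import Order.TTheory GRing.Theory Num.Theory.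
Local Open Scope ring_scope.

Definition is_ideal (R : comNzRingType) (I : R -> Prop) : Prop :=
  I 0 /\ (forall x y, I x -> I y -> I (x + y)) /\ (forall r x, I x -> I (r * x)).

Definition artinian_ring (R : comNzRingType) : Prop :=
  forall I : nat -> R -> Prop,
    (forall k, is_ideal (I k)) ->
    (forall k x, I k.+1 x -> I k x) ->
    exists N, forall k, (N <= k)%N -> forall x, I k x <-> I N x.

Definition fin_gen (R : pzRingType) (V : lmodType R) : Prop :=
  exists s : seq V, forall v : V, exists c : nat -> R,
    v = \sum_(i < size s) c i *: s`_i.

Definition artin_algebra (R : comNzRingType) (T : algType R) : Prop :=
  artinian_ring R /\ fin_gen (T : lmodType R).

Definition is_submod (T : pzRingType) (X : lmodType T) (U : X -> Prop) : Prop :=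
  U 0 /\ (forall x y, U x -> U y -> U (x + y)) /\ (forall t x, U x -> U (t *: x)).

Definition indecomposable (V : zmodType) (sub : (V -> Prop) -> Prop) : Prop :=
  (exists v : V, v <> 0) /\
  forall U W : V -> Prop, sub U -> sub W ->
    (forall v, U v -> W v -> v = 0) ->
    (forall v, exists u w, U u /\ W w /\ v = u + w) ->
    (forall v, U v -> v = 0) \/ (forall v, W v -> v = 0).

(* Upper triangular n x n matrices: the elements of B_n'. *)
Definition upper_tri (T : pzRingType) (n : nat) (A : 'M[T]_n) : Prop :=
  forall i j : 'I_n, (j < i)%N -> A i j = 0.

(* M_n = column T^n, right T-action by matrix multiplication. *)
Definition rmulM (T : pzRingType) (n : nat) (m : 'cV[T]_n) (t : T) : 'cV[T]_n :=
  m *m (t%:M : 'M[T]_1).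

Definition balanced (T : pzRingType) (n : nat) (X : lmodType T) (G : zmodType)
  (f : 'cV[T]_n -> X -> G) : Prop :=
  (forall m1 m2 x, f (m1 + m2) x = f m1 x + f m2 x) /\
  (forall m x1 x2, f m (x1 + x2) = f m x1 + f m x2) /\
  (forall m t x, f (rmulM m t) x = f m (t *: x)).

Definition is_tensor_product (T : pzRingType) (n : nat) (X : lmodType T)
  (P : zmodType) (tens : 'cV[T]_n -> X -> P) : Prop :=
  balanced tens /\
  forall (G : zmodType) (f : 'cV[T]_n -> X -> G), balanced f ->
    (exists g : P -> G, (forall p q, g (p + q) = g p + g q) /\
                        (forall m x, g (tens m x) = f m x)) /\
    (forall g1 g2 : P -> G,
        (forall p q, g1 (p + q) = g1 p + g1 q) ->
        (forall p q, g2 (p + q) = g2 p + g2 q) ->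
        (forall m x, g1 (tens m x) = f m x) ->
        (forall m x, g2 (tens m x) = f m x) ->
        forall p, g1 p = g2 p).

Definition induced_action (T : pzRingType) (n : nat) (X : lmodType T)
  (P : zmodType) (tens : 'cV[T]_n -> X -> P) (act : 'M[T]_n -> P -> P) : Prop :=
  forall A, upper_tri A ->
    (forall p q, act A (p + q) = act A p + act A q) /\
    (forall m x, act A (tens m x) = tens (A *m m) x).

Definition is_Bsubmod (T : pzRingType) (n : nat) (P : zmodType)
  (act : 'M[T]_n -> P -> P) (U : P -> Prop) : Prop :=
  U 0 /\ (forall p q, U p -> U q -> U (p + q)) /\
  (forall A p, upper_tri A -> U p -> U (act A p)).

From mathcomp Require Import all_boot all_order all_algebra.
Set Implicit Arguments. Unset Strict Implicit. Unset Printing Implicit Defensive.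
Import GRing.Theory.
Local Open Scope ring_scope.

(* View M_n (x) X as the column (X, ..., X): the universal property gives
   coordinate maps pi_j (m (x) x |-> m_j x), and the matrix unit E_ij (i <= j)
   acts as p |-> e_i (x) pi_j p.  A B_n'-submodule U yields the T-submodule
   U_0 = {x | e_0 (x) x \in U} of X.  A decomposition U (+) W of M_n (x) X
   induces X = U_0 (+) W_0, because E_00 preserves U and W and e_0 (x) - is
   injective (pi_0 is a left inverse).  And U_0 = 0 forces U = 0: for p in U,
   E_0j p = e_0 (x) pi_j p lies in U, so pi_j p = 0 for all j, whence
   p = sum_j E_jj p = sum_j e_j (x) pi_j p = 0. *)

Definition col_unit {T : pzRingType} {n : nat} (i : 'I_n) : 'cV[T]_n :=
  delta_mx i 0.

Lemma balanced_coord (T : pzRingType) (n : nat) (X : lmodType T) (j : 'I_n) :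
  balanced (fun (m : 'cV[T]_n) (x : X) => m j 0 *: x).
Proof.
split; first by move=> m1 m2 x; rewrite mxE scalerDl.
split; first by move=> m x1 x2; rewrite scalerDr.
by move=> m t x; rewrite /rmulM mxE big_ord1 mxE eqxx mulr1n scalerA.
Qed.

Lemma upper_tri_delta {T : pzRingType} {n : nat} (i j : 'I_n) :
  (i <= j)%N -> upper_tri (delta_mx i j : 'M[T]_n).
Proof.
move=> le_ij a b lt_ba; rewrite mxE.
case: eqP => [ai|] //; case: eqP => [bj|] //=.
by move: lt_ba; rewrite ai bj ltnNge le_ij.
Qed.

Lemma upper_tri_scalar {T : pzRingType} {n : nat} (t : T) :
  upper_tri (t%:M : 'M[T]_n).
Proof.
move=> a b lt_ba; rewrite mxE.
have /negbTE -> : a != b by apply: contraTneq lt_ba => ->; rewrite ltnn.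
by rewrite mulr0n.
Qed.

Lemma delta_mulmx_col (T : pzRingType) (n : nat) (i j : 'I_n) (m : 'cV[T]_n) :
  delta_mx i j *m m = rmulM (col_unit i) (m j 0).
Proof.
rewrite /rmulM /col_unit -(@mul_delta_mx T n 1 n 0 i j) -mulmxA -rowE.
by rewrite {1}(mx11_scalar (row j m)) mxE.
Qed.

Lemma rmulM_col_unit (T : pzRingType) (n : nat) (i : 'I_n) (t : T) :
  rmulM (col_unit i) t = t%:M *m col_unit i.
Proof.
rewrite mul_scalar_mx; apply/matrixP => a b.
by rewrite !mxE big_ord1 !mxE (ord1 b) eqxx mulr1n mulr_natl mulr_natr.
Qed.

Section TensorProduct.

Variables (T : pzRingType) (n : nat) (X : lmodType T) (P : zmodType).
Variable tens : 'cV[T]_n -> X -> P.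
Hypothesis tensP : is_tensor_product tens.

Lemma tensDr m : {morph tens m : x y / x + y}.
Proof. by case: tensP => [[_ [tensDr _]] _]; exact: tensDr. Qed.

Lemma tens0l x : tens 0 x = 0.
Proof.
case: tensP => [[tensDl _] _].
by apply/(addrI (tens 0 x)); rewrite addr0 -tensDl addr0.
Qed.

Lemma tens0r m : tens m 0 = 0.
Proof. by apply/(addrI (tens m 0)); rewrite addr0 -tensDr addr0. Qed.

Lemma tens_suml (I : finType) (F : I -> 'cV[T]_n) x :
  tens (\sum_i F i) x = \sum_i tens (F i) x.
Proof.
case: tensP => [[tensDl _] _].
by apply: (big_morph (tens^~ x)) => [m1 m2|]; [exact: tensDl | exact: tens0l].
Qed.

Lemma tens_lift (G : zmodType) (f : 'cV[T]_n -> X -> G) : balanced f ->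
  exists g : P -> G,
    {morph g : p q / p + q} /\ forall m x, g (tens m x) = f m x.
Proof. by case: tensP => _ univ /univ[]. Qed.

Lemma tens_ext (G : zmodType) (g1 g2 : P -> G) :
  {morph g1 : p q / p + q} -> {morph g2 : p q / p + q} ->
  (forall m x, g1 (tens m x) = g2 (tens m x)) -> g1 =1 g2.
Proof.
case: tensP => [[tensDl [_ tensA]] univ] g1D g2D g12.
have bal : balanced (fun m x => g2 (tens m x)).
  split; first by move=> m1 m2 x; rewrite tensDl g2D.
  split; first by move=> m x1 x2; rewrite tensDr g2D.
  by move=> m t x; rewrite tensA.
by have [_ ext] := univ G _ bal; apply: ext.
Qed.

Definition tens_coord (j : 'I_n) (pi : P -> X) : Prop :=
  {morph pi : p q / p + q} /\ forall m x, pi (tens m x) = m j 0 *: x.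

Lemma tens_coord_exists j : exists pi, tens_coord j pi.
Proof. exact: tens_lift (balanced_coord X j). Qed.

Lemma tens_coord_col_unit j pi x : tens_coord j pi -> pi (tens (col_unit j) x) = x.
Proof. by case=> _ ->; rewrite mxE !eqxx scale1r. Qed.

Lemma tens_col_unit_inj j x : tens (col_unit j) x = 0 -> x = 0.
Proof.
have [pi piP] := tens_coord_exists j.
move=> tx0; rewrite -(tens_coord_col_unit x piP) tx0 -(tens0l 0).
by case: piP => _ ->; rewrite mxE scale0r.
Qed.

Variable act : 'M[T]_n -> P -> P.
Hypothesis actP : induced_action tens act.

Lemma act_delta (i j : 'I_n) pi : (i <= j)%N -> tens_coord j pi ->
  forall p, act (delta_mx i j) p = tens (col_unit i) (pi p).
Proof.
move=> le_ij [piD piE]; have [actD actE] := actP (upper_tri_delta le_ij).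
apply: (tens_ext (g2 := fun p => tens (col_unit i) (pi p))) => // [p q|m x].
  by rewrite piD tensDr.
case: tensP => [[_ [_ tensA]] _].
by rewrite actE delta_mulmx_col tensA piE.
Qed.

Lemma act_sum_diag p : p = \sum_i act (delta_mx i i) p.
Proof.
have actD (i : 'I_n) := (actP (upper_tri_delta (leqnn i))).1.
have actE (i : 'I_n) := (actP (upper_tri_delta (leqnn i))).2.
apply: (tens_ext (g1 := id) (g2 := fun q => \sum_i act (delta_mx i i) q))
  => // [q r|m x].
  by rewrite -big_split; apply: eq_bigr => i _; rewrite actD.
rewrite -[in LHS](mul1mx m) mx1_sum_delta mulmx_suml tens_suml.
by apply: eq_bigr => i _; rewrite actE.
Qed.

Lemma tens_col_unit_scale i t x :
  tens (col_unit i) (t *: x) = act t%:M (tens (col_unit i) x).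
Proof.
case: tensP => [[_ [_ tensA]] _].
by rewrite (actP (upper_tri_scalar t)).2 -rmulM_col_unit tensA.
Qed.

Hypothesis n_gt0 : (0 < n)%N.

Definition top : 'I_n := Ordinal n_gt0.

Definition top_slice (U : P -> Prop) (x : X) : Prop := U (tens (col_unit top) x).

Lemma top_slice_coord U j pi p : is_Bsubmod act U -> tens_coord j pi -> U p ->
  top_slice U (pi p).
Proof.
case=> _ [_ Uact] piP Up; have top_le : (top <= j)%N by [].
rewrite /top_slice -(act_delta top_le piP).
exact/Uact/Up/upper_tri_delta.
Qed.

Lemma is_submod_top_slice U : is_Bsubmod act U -> is_submod (top_slice U).
Proof.
case=> U0 [UD Uact]; split; first by rewrite /top_slice tens0r.
split; first by move=> x y Ux Uy; rewrite /top_slice tensDr; apply: UD.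
move=> t x Ux; rewrite /top_slice tens_col_unit_scale.
exact/Uact/Ux/upper_tri_scalar.
Qed.

Lemma top_slice_eq0 U : is_Bsubmod act U ->
  (forall x, top_slice U x -> x = 0) -> forall p, U p -> p = 0.
Proof.
move=> subU U0_eq0 p Up; rewrite (act_sum_diag p) big1 // => j _.
have [pi piP] := tens_coord_exists j.
rewrite (act_delta (leqnn j) piP) (U0_eq0 _ (top_slice_coord subU piP Up)).
exact: tens0r.
Qed.

Lemma top_slice_cover U W : is_Bsubmod act U -> is_Bsubmod act W ->
  (forall p, exists u w, U u /\ W w /\ p = u + w) ->
  forall x, exists u w, top_slice U u /\ top_slice W w /\ x = u + w.
Proof.
move=> subU subW UW x; have [pi piP] := tens_coord_exists top.
have [u [w [Uu [Ww uw]]]] := UW (tens (col_unit top) x).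
exists (pi u), (pi w); split; first exact: top_slice_coord piP Uu.
split; first exact: top_slice_coord piP Ww.
by case: (piP) => piD _; rewrite -piD -uw (tens_coord_col_unit x piP).
Qed.

End TensorProduct.

Theorem lemma4p3 (R : comNzRingType) (T : algType R) (X : lmodType T) (n : nat)
  (P : zmodType) (tens : 'cV[T]_n -> X -> P) (act : 'M[T]_n -> P -> P) :
  artin_algebra T ->
  fin_gen X ->
  indecomposable (@is_submod T X) ->
  (0 < n)%N ->
  is_tensor_product tens ->
  induced_action tens act ->
  indecomposable (is_Bsubmod act).
Proof.
move=> _ _ [[x x_neq0] indX] n_gt0 tensP actP.
split.
  by exists (tens (col_unit (top n_gt0)) x) => /(tens_col_unit_inj tensP).
move=> U W subU subW UW_eq0 UW_cover.
have [U0_eq0|W0_eq0] := indX _ _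
  (is_submod_top_slice tensP actP n_gt0 subU)
  (is_submod_top_slice tensP actP n_gt0 subW)
  (fun y Uy Wy => tens_col_unit_inj tensP (UW_eq0 _ Uy Wy))
  (top_slice_cover tensP actP n_gt0 subU subW UW_cover).
- by left=> p; apply: (top_slice_eq0 tensP actP subU U0_eq0).
- by right=> p; apply: (top_slice_eq0 tensP actP subW W0_eq0).
Qed.
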